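(* Let $\Gamma$ be a graph of order $n$, minimum degree $\delta$ and maximum degree $\Delta$. (1) For every $k\in\{2-\Delta,\dots,\Delta\}$, $n-\alpha_{\lfloor\frac{\Delta-k}{2}\rfloor}(\Gamma)\le\gamma_k^o(\Gamma)$. (2) For every $k\in\{1,\dots,\delta\}$, $\gamma_k^o(\Gamma)\le n-\alpha_{\lfloor\frac{\delta-k}{2}\rfloor}(\Gamma)$. (3) If $\Gamma$ is $\delta$-regular with $\delta>0$, then for every $k\in\{1,\dots,\delta\}$, $\gamma_k^o(\Gamma)=n-\alpha_{\lfloor\frac{\delta-k}{2}\rfloor}(\Gamma)$.
   Context: Graphs are finite and simple. For $S\subseteq V$ and $v\in V$, $\delta_S(v)$ is the number of neighbours of $v$ in $S$, $\overline{S}=V\setminus S$, and $\partial(S)$ is the set of vertices of $\overline{S}$ with a neighbour in $S$. For an integer $k$, a nonempty $S\subseteq V$ is an offensive $k$-alliance if $\delta_S(v)\ge\delta_{\overline{S}}(v)+k$ for all $v\in\partial(S)$, and a global offensive $k$-alliance if moreover it is dominating. $\gamma_k^o(\Gamma)$ is the minimum cardinality of a global offensive $k$-alliance. A set $S$ is $r$-dependent if $\delta_S(v)\le r$ for all $v\in S$; $\alpha_r(\Gamma)$ is the maximum cardinality of an $r$-dependent set in $\Gamma$. *)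

(* A finite simple graph on vertex type T : finType is a
   symmetric irreflexive relation e : rel T (hypotheses in the theorem). *)
From mathcomp Require Import all_boot all_order all_algebra.
Set Implicit Arguments. Unset Strict Implicit. Unset Printing Implicit Defensive.
Import Order.TTheory GRing.Theory Num.Theory.

Section Graph.
Variables (T : finType) (e : rel T).

Definition ndeg (S : {set T}) (v : T) : nat := #|[set u in S | e v u]|.

Definition deg (v : T) : nat := ndeg [set: T] v.

(* maximum and minimum degree (min over an empty vertex set defaults to 0 = n) *)
Definition maxdeg : nat := \max_(v : T) deg v.
Definition mindeg : nat := \big[minn/#|T|]_(v : T) deg v.

Definition boundary (S : {set T}) : {set T} :=
  [set v in ~: S | [exists u in S, e v u]].

Definition dominating (S : {set T}) : bool :=
  [forall v, (v \notin S) ==> [exists u in S, e v u]].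

Definition offensive_alliance (k : int) (S : {set T}) : bool :=
  (S != set0) &&
  [forall v in boundary S, ((ndeg S v)%:Z >= (ndeg (~: S) v)%:Z + k)%R].

Definition global_offensive_alliance (k : int) (S : {set T}) : bool :=
  offensive_alliance k S && dominating S.

(* gamma_k^o: minimum cardinality of a global offensive k-alliance
   (the whole vertex set is always one when T is nonempty). *)
Definition gamma_o (k : int) : nat :=
  \big[minn/#|T|]_(S : {set T} | global_offensive_alliance k S) #|S|.

Definition r_dependent (r : int) (S : {set T}) : bool :=
  [forall v in S, ((ndeg S v)%:Z <= r)%R].

Definition alpha (r : int) : nat :=
  \max_(S : {set T} | r_dependent r S) #|S|.

End Graph.

(* Write n_S(v) and n_S'(v) for the numbers of neighbours of v inside and
   outside S; they add up to deg v.  If S is a global offensive k-alliance,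
   every v outside S lies in the boundary, so 2 n_S'(v) + k <= deg v <= Delta
   and the complement of S is floor((Delta - k)/2)-dependent: hence
   n - |S| <= alpha.  Conversely, if X is floor((delta - k)/2)-dependent,
   every v in X has 2 n_X(v) + k <= delta <= deg v, i.e. n_X'(v) >= n_X(v) + k;
   for k >= 1 this makes the complement of X a global offensive k-alliance, so
   gamma_k^o <= n - |X|.  For regular graphs Delta = delta and the bounds meet. *)
From mathcomp Require Import all_boot all_order all_algebra.
From mathcomp Require Import zify.
Set Implicit Arguments. Unset Strict Implicit. Unset Printing Implicit Defensive.
Import Order.TTheory GRing.Theory Num.Theory.

Section OffensiveAllianceBounds.
Variables (T : finType) (e : rel T).

Lemma ndegUC (S : {set T}) v : ndeg e S v + ndeg e (~: S) v = deg e v.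
Proof.
rewrite /deg /ndeg -(cardsID S [set u in [set: T] | e v u]).
by congr (_ + _); apply: eq_card => u; rewrite !inE andbC.
Qed.

Lemma ndeg_gt0P (S : {set T}) v : reflect (exists2 u, u \in S & e v u) (0 < ndeg e S v).
Proof.
apply: (iffP card_gt0P) => [[u] | [u uS evu]]; first by rewrite inE => /andP[]; exists u.
by exists u; rewrite inE uS.
Qed.

Lemma deg_le_maxdeg v : deg e v <= maxdeg e.
Proof. exact: leq_bigmax. Qed.

Lemma mindeg_le_deg v : mindeg e <= deg e v.
Proof. exact: (@bigmin_le _ nat). Qed.

Lemma mindeg_le_card : mindeg e <= #|T|.
Proof. exact: (@bigmin_le_id _ nat). Qed.

Lemma regular_maxdeg :
  (forall v, deg e v = mindeg e) -> 0 < mindeg e -> maxdeg e = mindeg e.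
Proof.
move=> reg /leq_trans/(_ mindeg_le_card)/card_gt0P[v _].
apply/eqP; rewrite eqn_leq -{2}(reg v) deg_le_maxdeg andbT.
by apply/bigmax_leqP => u _; rewrite reg.
Qed.

Lemma alpha_max r X : r_dependent e r X -> #|X| <= alpha e r.
Proof. exact: leq_bigmax_cond. Qed.

Lemma alpha_witness r : exists2 X, r_dependent e r X & #|X| = alpha e r.
Proof.
have dep0 : r_dependent e r set0 by apply/forall_inP => v; rewrite inE.
have [|X depX alphaX] :=
  @eq_bigmax_cond _ (r_dependent e r) (fun S : {set T} => #|S|) (_ : 0 < #|r_dependent e r|).
  by apply/card_gt0P; exists set0.
by exists X => //; rewrite /alpha -alphaX.
Qed.

Lemma gamma_o_min k S : global_offensive_alliance e k S -> gamma_o e k <= #|S|.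
Proof. exact: (@bigmin_le_cond _ nat _ _ S _ (fun S : {set T} => #|S|)). Qed.

Lemma gamma_o_max k m : m <= #|T| ->
  (forall S, global_offensive_alliance e k S -> m <= #|S|) -> m <= gamma_o e k.
Proof. by move=> mT mS; apply/(@bigmin_geP _ nat). Qed.

Lemma gamma_o_le_card k : gamma_o e k <= #|T|.
Proof. exact: (@bigmin_le_id _ nat). Qed.

Lemma complement_alliance_dependent k S :
  global_offensive_alliance e k S ->
  r_dependent e (((maxdeg e)%:Z - k) %/ 2)%Z (~: S).
Proof.
case/andP=> /andP[_ /forall_inP alliance] /forallP dom.
apply/forall_inP => v vS'; have vS : v \notin S by rewrite inE in vS'.
have /alliance : v \in boundary e S by rewrite inE vS' (implyP (dom v) vS).
rewrite lez_divRL //.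
have := ndegUC S v; have := deg_le_maxdeg v; lia.
Qed.

Lemma dependent_ndegC k X v :
  r_dependent e (((mindeg e)%:Z - k) %/ 2)%Z X -> v \in X ->
  ((ndeg e X v)%:Z + k <= (ndeg e (~: X) v)%:Z)%R.
Proof.
move=> /forall_inP depX /depX; rewrite lez_divRL //.
have := ndegUC X v; have := mindeg_le_deg v; lia.
Qed.

Lemma complement_dependent_alliance k X :
  (1 <= k)%R -> 0 < #|T| ->
  r_dependent e (((mindeg e)%:Z - k) %/ 2)%Z X ->
  global_offensive_alliance e k (~: X).
Proof.
move=> k_ge1 /card_gt0P[w _] depX.
have outX v : v \in X -> exists2 u, u \in ~: X & e v u.
  by move=> vX; apply/ndeg_gt0P; have := dependent_ndegC depX vX; lia.
have X'_neq0 : ~: X != set0.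
  apply/set0Pn; case: (boolP (w \in X)) => [/outX[u] | wX']; first by exists u.
  by exists w; rewrite inE.
rewrite /global_offensive_alliance /offensive_alliance X'_neq0 /=; apply/andP; split.
  apply/forall_inP => v; rewrite inE setCK => /andP[vX _].
  exact: dependent_ndegC.
apply/forallP => v; apply/implyP; rewrite inE negbK => /outX[u uX' evu].
by apply/exists_inP; exists u.
Qed.

Lemma gamma_o_lower_bound k :
  #|T| - alpha e (((maxdeg e)%:Z - k) %/ 2)%Z <= gamma_o e k.
Proof.
apply: gamma_o_max => [|S /complement_alliance_dependent/alpha_max]; first exact: leq_subr.
by rewrite -(cardsC S); lia.
Qed.

Lemma gamma_o_upper_bound k : (1 <= k)%R ->
  gamma_o e k <= #|T| - alpha e (((mindeg e)%:Z - k) %/ 2)%Z.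
Proof.
move=> k_ge1; have [T0 | T_gt0] := posnP #|T|.
  by have := gamma_o_le_card k; rewrite T0.
have [X depX <-] := alpha_witness (((mindeg e)%:Z - k) %/ 2)%Z.
rewrite -(cardsC X) addKn; apply: gamma_o_min.
exact: complement_dependent_alliance.
Qed.

End OffensiveAllianceBounds.

Theorem mainTheorem3 (T : finType) (e : rel T)
  (esym : symmetric e) (eirr : irreflexive e) :
  (forall k : int, (2%:Z - (maxdeg e)%:Z <= k)%R -> (k <= (maxdeg e)%:Z)%R ->
     #|T| - alpha e (((maxdeg e)%:Z - k) %/ 2)%Z <= gamma_o e k) /\
  (forall k : int, (1 <= k)%R -> (k <= (mindeg e)%:Z)%R ->
     gamma_o e k <= #|T| - alpha e (((mindeg e)%:Z - k) %/ 2)%Z) /\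
  ((forall v : T, deg e v = mindeg e) -> 0 < mindeg e ->
   forall k : int, (1 <= k)%R -> (k <= (mindeg e)%:Z)%R ->
     gamma_o e k = #|T| - alpha e (((mindeg e)%:Z - k) %/ 2)%Z).
Proof.
split; first by move=> k _ _; apply: gamma_o_lower_bound.
split; first by move=> k k_ge1 _; apply: gamma_o_upper_bound.
move=> reg mindeg_gt0 k k_ge1 _.
apply/eqP; rewrite eqn_leq gamma_o_upper_bound //=.
by rewrite -(regular_maxdeg reg mindeg_gt0) gamma_o_lower_bound.
Qed.
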